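(* Let $p\ge 0$. Then for all $r\in(0,1)$, $$2^{1+p}K(1/2)\,(r-r^2)^p\le (1-r)^pK(1-r)+r^pK(r).$$
   Context: $K(x)={\cal K}(\sqrt x)=\frac\pi2\,{}_2F_1(1/2,1/2;1;x)$ for $x\in[0,1)$, where ${\cal K}(r)=\int_0^{\pi/2}(1-r^2\sin^2t)^{-1/2}dt$ is the complete elliptic integral of the first kind. *)

From Stdlib Require Import Reals.
From Coquelicot Require Import Coquelicot.
Open Scope R_scope.

Definition calK (r : R) : R :=
  RInt (fun t => / sqrt (1 - r ^ 2 * (sin t) ^ 2)) 0 (PI / 2).

Definition K (x : R) : R := calK (sqrt x).

(* For a := sin^2 t the integrand (1 - x a)^(-1/2) of K(x) is convex and
   nondecreasing in x.  Convexity gives 2 f(1/2) <= f(r) + f(1-r); since the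
   weights (1-r)^p and r^p are ordered like f(1-r) and f(r), Chebyshev's
   inequality for two terms yields ((1-r)^p + r^p) f(1/2) <= (1-r)^p f(1-r)
   + r^p f(r).  Finally (1-r)^p + r^p >= 2 (r(1-r))^(p/2) >= 2^(1+p) (r(1-r))^p
   because 4 r (1-r) <= 1.  Integrating over [0, pi/2] gives the theorem. *)

From Stdlib Require Import Reals Lra Psatz.
From Coquelicot Require Import Coquelicot.
Open Scope R_scope.

Lemma Rpower_mul_le_add (p a b : R) :
  0 <= p -> 0 < a -> 0 < b -> 4 * (a * b) <= 1 ->
  Rpower 2 (1 + p) * Rpower (a * b) p <= Rpower a p + Rpower b p.
Proof.
  intros Hp Ha Hb Hab.
  set (u := Rpower a p); set (v := Rpower b p); set (e := Rpower 2 p).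
  assert (Hu : 0 < u) by apply exp_pos.
  assert (Hv : 0 < v) by apply exp_pos.
  assert (He : 0 < e) by apply exp_pos.
  assert (Heuv : e * e * (u * v) <= 1).
  { unfold e, u, v; rewrite !Rpower_mult_distr by nra.
    apply Rle_trans with (Rpower 1 p).
    - apply Rle_Rpower_l; [exact Hp | nra].
    - unfold Rpower; rewrite ln_1, Rmult_0_r, exp_0; lra. }
  assert (Hsq : Rsqr (e * (u * v)) <= Rsqr ((u + v) / 2)).
  { unfold Rsqr.
    assert (e * (u * v) * (e * (u * v)) <= u * v).
    { replace (e * (u * v) * (e * (u * v))) with (e * e * (u * v) * (u * v))
        by ring.
      assert (0 < u * v) by nra. nra. }
    assert (0 <= (u - v) * (u - v)) by apply Rle_0_sqr. nra. }
  apply Rsqr_incr_0_var in Hsq; [|lra].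
  rewrite Rpower_plus, Rpower_1, <- Rpower_mult_distr by lra.
  fold u v e; lra.
Qed.

Lemma inv_sqrt_midpoint_convex (y z : R) : 0 < y -> 0 < z ->
  2 * / sqrt ((y + z) / 2) <= / sqrt y + / sqrt z.
Proof.
  intros Hy Hz.
  pose proof (sqrt_lt_R0 _ Hy) as Hp1; pose proof (sqrt_lt_R0 _ Hz) as Hp2.
  assert (Hm : 0 < (y + z) / 2) by lra.
  pose proof (sqrt_lt_R0 _ Hm) as Hq.
  assert (Hqm : (sqrt y + sqrt z) / 2 <= sqrt ((y + z) / 2)).
  { rewrite <- (sqrt_pow2 ((sqrt y + sqrt z) / 2)) by lra.
    apply sqrt_le_1_alt.
    rewrite <- (pow2_sqrt y), <- (pow2_sqrt z) at 2 by lra.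
    assert (0 <= (sqrt y - sqrt z) * (sqrt y - sqrt z)) by apply Rle_0_sqr.
    nra. }
  set (p1 := sqrt y) in *; set (p2 := sqrt z) in *;
  set (q := sqrt ((y + z) / 2)) in *.
  assert (Hgm : 2 * p1 * p2 <= q * (p1 + p2)).
  { assert (0 <= (p1 - p2) * (p1 - p2)) by apply Rle_0_sqr. nra. }
  apply (Rmult_le_reg_r (p1 * p2 * q)); [repeat apply Rmult_lt_0_compat; lra|].
  replace ((/ p1 + / p2) * (p1 * p2 * q)) with (q * (p1 + p2)) by (field; lra).
  replace (2 * / q * (p1 * p2 * q)) with (2 * p1 * p2) by (field; lra).
  exact Hgm.
Qed.

Definition K_integrand (x t : R) : R := / sqrt (1 - x * sin t ^ 2).

Lemma sin_sqr_bound (t : R) : 0 <= sin t ^ 2 <= 1.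
Proof. pose proof (SIN_bound t); nra. Qed.

Lemma K_integrand_pos (x t : R) : 0 <= x < 1 -> 0 < K_integrand x t.
Proof.
  intros Hx; pose proof (sin_sqr_bound t).
  apply Rinv_0_lt_compat, sqrt_lt_R0; nra.
Qed.

Lemma K_integrand_le (x y t : R) :
  0 <= x -> x <= y -> y < 1 -> K_integrand x t <= K_integrand y t.
Proof.
  intros Hx Hxy Hy; pose proof (sin_sqr_bound t).
  apply Rinv_le_contravar; [apply sqrt_lt_R0; nra|].
  apply sqrt_le_1_alt; nra.
Qed.

Lemma K_integrand_midpoint_convex (r t : R) : 0 < r < 1 ->
  2 * K_integrand (1 / 2) t <= K_integrand r t + K_integrand (1 - r) t.
Proof.
  intros Hr; pose proof (sin_sqr_bound t).
  unfold K_integrand.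
  replace (1 - 1 / 2 * sin t ^ 2)
    with ((1 - r * sin t ^ 2 + (1 - (1 - r) * sin t ^ 2)) / 2) by field.
  apply inv_sqrt_midpoint_convex; nra.
Qed.

Lemma K_integrand_weighted_le (p r t : R) : 0 <= p -> 0 < r < 1 ->
  (Rpower (1 - r) p + Rpower r p) * K_integrand (1 / 2) t
  <= Rpower (1 - r) p * K_integrand (1 - r) t + Rpower r p * K_integrand r t.
Proof.
  intros Hp Hr.
  set (u := Rpower (1 - r) p); set (v := Rpower r p).
  set (f := K_integrand (1 - r) t); set (g := K_integrand r t).
  assert (Hconv : 2 * K_integrand (1 / 2) t <= g + f)
    by exact (K_integrand_midpoint_convex r t Hr).
  assert (Hu : 0 < u) by apply exp_pos.
  assert (Hv : 0 < v) by apply exp_pos.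
  assert (Hsame : 0 <= (u - v) * (f - g)).
  { destruct (Rle_lt_dec r (1 - r)).
    - assert (v <= u) by (apply Rle_Rpower_l; lra).
      assert (g <= f) by (apply K_integrand_le; lra). nra.
    - assert (u <= v) by (apply Rle_Rpower_l; lra).
      assert (f <= g) by (apply K_integrand_le; lra). nra. }
  nra.
Qed.

Lemma ex_RInt_K_integrand (x : R) : 0 <= x < 1 ->
  ex_RInt (K_integrand x) 0 (PI / 2).
Proof.
  intros Hx; apply (@ex_RInt_continuous R_CompleteNormedModule); intros z _.
  apply (@ex_derive_continuous R_AbsRing R_NormedModule).
  pose proof (sin_sqr_bound z).
  assert (0 < 1 - x * sin z ^ 2) by nra.
  unfold K_integrand; auto_derive.
  repeat split; [lra | apply Rgt_not_eq, sqrt_lt_R0; lra].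
Qed.

Lemma K_RInt (x : R) : 0 <= x -> K x = RInt (K_integrand x) 0 (PI / 2).
Proof. intros Hx; unfold K, calK, K_integrand; rewrite pow2_sqrt; auto. Qed.

Lemma RInt_scal_le_lincomb (f g h : R -> R) (a b c1 c2 c3 : R) : a <= b ->
  ex_RInt f a b -> ex_RInt g a b -> ex_RInt h a b ->
  (forall t, a < t < b -> c3 * h t <= c1 * f t + c2 * g t) ->
  c3 * RInt h a b <= c1 * RInt f a b + c2 * RInt g a b.
Proof.
  intros Hab If Ig Ih Hle.
  assert (Hscal : forall k F, ex_RInt F a b ->
                  k * RInt F a b = RInt (fun t => k * F t) a b).
  { intros k F IF; symmetry; exact (@RInt_scal R_CompleteNormedModule F a b k IF). }
  pose proof (@ex_RInt_scal R_CompleteNormedModule f a b c1 If) as If1.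
  pose proof (@ex_RInt_scal R_CompleteNormedModule g a b c2 Ig) as Ig2.
  rewrite !Hscal by assumption.
  replace (RInt _ a b + RInt _ a b)
    with (RInt (fun t => c1 * f t + c2 * g t) a b)
    by exact (@RInt_plus R_CompleteNormedModule _ _ a b If1 Ig2).
  apply RInt_le; auto.
  - exact (@ex_RInt_scal R_CompleteNormedModule h a b c3 Ih).
  - exact (@ex_RInt_plus R_CompleteNormedModule _ _ a b If1 Ig2).
Qed.

Theorem mainTheorem14 (p : R) (hp : 0 <= p) (r : R) (hr : 0 < r < 1) :
  Rpower 2 (1 + p) * K (1 / 2) * Rpower (r - r ^ 2) p
  <= Rpower (1 - r) p * K (1 - r) + Rpower r p * K r.
Proof.
  assert (Hpi : 0 <= PI / 2) by (pose proof PI_RGT_0; lra).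
  assert (Hweight : Rpower 2 (1 + p) * Rpower (r - r ^ 2) p
                    <= Rpower (1 - r) p + Rpower r p).
  { replace (r - r ^ 2) with ((1 - r) * r) by ring.
    apply Rpower_mul_le_add; try lra.
    assert (0 <= (2 * r - 1) * (2 * r - 1)) by apply Rle_0_sqr. nra. }
  assert (HK : 0 <= RInt (K_integrand (1 / 2)) 0 (PI / 2)).
  { apply RInt_ge_0; [exact Hpi | apply ex_RInt_K_integrand; lra |].
    intros t _; apply Rlt_le, K_integrand_pos; lra. }
  rewrite !K_RInt by lra.
  apply Rle_trans with
    ((Rpower (1 - r) p + Rpower r p) * RInt (K_integrand (1 / 2)) 0 (PI / 2)).
  - rewrite (Rmult_comm _ (Rpower (r - r ^ 2) p)), <- Rmult_assoc.
    apply Rmult_le_compat_r; [exact HK|]. rewrite Rmult_comm. exact Hweight.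
  - apply RInt_scal_le_lincomb; [exact Hpi | apply ex_RInt_K_integrand; lra ..|].
    intros t _; now apply K_integrand_weighted_le.
Qed.
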